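(* For all $(y_1,a_1),(y_2,a_2)\in(\mathcal{A}\sqcup\mathcal{B})\times\mathcal{A}$ and $\varepsilon_1,\varepsilon_2\in\{\pm1\}$, either $(y_1,a_1)=(y_2,a_2)$ and $\varepsilon_1=-\varepsilon_2$, or fewer than $\frac14 D_{\mathcal{A}}$ letters of $v(y_j,a_j)$ ($j=1,2$) are cancelled in the free reduction of the product $v(y_1,a_1)^{\varepsilon_1}v(y_2,a_2)^{\varepsilon_2}$. In particular, $S_{\mathcal{A}}=\{v(y,a):(y,a)\in(\mathcal{A}\sqcup\mathcal{B})\times\mathcal{A}\}$ is a basis of a free subgroup of $F(\mathcal{B})$.
   Context: Let $\mathcal{A}$ be a finite non-empty alphabet and $\mathcal{B}=\{b_1,b_2\}$ (disjoint from $\mathcal{A}$); $F(\mathcal{B})$ is the free group on $\mathcal{B}$. Let $D_{\mathcal{A}}=4|\mathcal{A}|(|\mathcal{A}|+2)$ and fix a bijection $\eta_{\mathcal{A}}:(\mathcal{A}\sqcup\mathcal{B})\times\mathcal{A}\to\{1,\dots,D_{\mathcal{A}}/4\}$. For $y\in\mathcal{A}\sqcup\mathcal{B}$ and $a\in\mathcal{A}$ set $k=\eta_{\mathcal{A}}(y,a)$ and $v(y,a)=b_1^k(b_2b_1)^{D_{\mathcal{A}}-2k}b_2^k\in F(\mathcal{B})$. *)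

From mathcomp Require Import all_boot.
Set Implicit Arguments. Unset Strict Implicit. Unset Printing Implicit Defensive.

Definition Bgen := 'I_2.
Definition b1 : Bgen := @Ordinal 2 0 isT.
Definition b2 : Bgen := @Ordinal 2 1 isT.

(* A letter of F(B): a generator together with an "inverse" flag
   (false = b, true = b^-1).  A word is a sequence of letters. *)
Definition letter := (Bgen * bool)%type.
Definition word := seq letter.

Definition linv (x : letter) : letter := (x.1, ~~ x.2).
Definition inv_word (w : word) : word := rev (map linv w).

Definition reduce (w : word) : word :=
  foldr (fun x acc => match acc with
                      | y :: r => if y == linv x then r else x :: acc
                      | [::] => [:: x]
                      end) [::] w.

(* w^eps with eps in {+1,-1}; eps encoded as a bool, true meaning -1. *)
Definition wpow (w : word) (eps : bool) : word := if eps then inv_word w else w.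

(* Number of letters cancelled from each factor in the free reduction of
   the product u w of two freely reduced words: the largest n such that the
   last n letters of u are the inverse of the first n letters of w. *)
Definition cancelled (u w : word) : nat :=
  \max_(n < (minn (size u) (size w)).+1 | drop (size u - n) u == inv_word (take n w)) n.

Definition DA (A : finType) : nat := 4 * #|A| * (#|A| + 2).

Definition idx (A : finType) : finType := ((A + Bgen)%type * A)%type.

Definition vword (A : finType) (eta : idx A -> nat) (p : idx A) : word :=
  let k := eta p in
  nseq k (b1, false) ++ flatten (nseq (DA A - 2 * k) [:: (b2, false); (b1, false)])
  ++ nseq k (b2, false).

Definition eta_bij (A : finType) (eta : idx A -> nat) : Prop :=
  [/\ forall p, 1 <= eta p <= DA A %/ 4,
      injective eta &
      forall k, 1 <= k <= DA A %/ 4 -> exists p, eta p = k].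

Definition idx_reduced (A : finType) (s : seq (idx A * bool)) : bool :=
  sorted (fun x y => ~~ ((x.1 == y.1) && (x.2 != y.2))) s.

From mathcomp Require Import all_boot zify.
Set Implicit Arguments. Unset Strict Implicit. Unset Printing Implicit Defensive.

(* Every v(y,a) is a positive word, so v^e1 v'^e2 with e1 = e2 does not cancel
   at all.  For opposite signs the cancelled part is a common prefix of
   v = b1^k b2 ... and v' = b1^k' b2 ... (or, reversed, a common suffix of
   v = ... b1 b2^k and v' = ... b1 b2^k').  Since eta is injective, k <> k'
   unless the indices agree, and then that part has length at most
   min(k, k') < D/4.  As |v| >= D, consecutive factors of a reduced product
   cancel less than half of each other, and by induction from the right the
   free reduction of the product begins with more than half of its first
   factor; in particular it is not empty. *)

Lemma linvK : involutive linv.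
Proof. by case=> ? []. Qed.

Lemma inv_word_cat u w : inv_word (u ++ w) = inv_word w ++ inv_word u.
Proof. by rewrite /inv_word map_cat rev_cat. Qed.

Lemma inv_word_cons a w : inv_word (a :: w) = inv_word w ++ [:: linv a].
Proof. exact: (inv_word_cat [:: a]). Qed.

Lemma inv_wordK : involutive inv_word.
Proof. by move=> w; rewrite /inv_word map_rev revK -map_comp (eq_map linvK) map_id. Qed.

Lemma size_inv_word w : size (inv_word w) = size w.
Proof. by rewrite size_rev size_map. Qed.

Lemma take_inv_word n w : take n (inv_word w) = inv_word (drop (size w - n) w).
Proof. by rewrite /inv_word take_rev size_map map_drop. Qed.

Lemma prefix_map (T1 T2 : eqType) (f : T1 -> T2) s1 s2 : injective f ->
  prefix (map f s1) (map f s2) = prefix s1 s2.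
Proof. by move=> f_inj; rewrite !prefixE size_map -map_take (inj_eq (inj_map f_inj)). Qed.

Lemma suffix_inv_word s w : suffix s (inv_word w) = prefix (inv_word s) w.
Proof.
rewrite /inv_word -prefix_rev revK -map_rev.
by rewrite -(prefix_map _ _ (can_inj linvK)) (mapK linvK).
Qed.

Lemma prefix_inv_word s w : prefix (inv_word s) (inv_word w) = suffix s w.
Proof. by rewrite -suffix_inv_word inv_wordK. Qed.

Lemma leq_cancelled (u w s : word) :
  suffix s u -> prefix (inv_word s) w -> size s <= cancelled u w.
Proof.
move=> suf_s pre_s; have le_su := size_suffix suf_s.
have le_sw : size s <= size w by rewrite -(size_inv_word s) size_prefix.
have lt_s : size s < (minn (size u) (size w)).+1 by rewrite ltnS leq_min le_su.
apply: (@leq_bigmax_cond _ _ (fun n : 'I__ => nat_of_ord n) (Ordinal lt_s)).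
move: suf_s pre_s; rewrite suffixE prefixE size_inv_word => /eqP-> /eqP->.
by rewrite inv_wordK.
Qed.

Lemma cancelled_leq u w m :
  (forall s, suffix s u -> prefix (inv_word s) w -> size s <= m) ->
  cancelled u w <= m.
Proof.
move=> bound; apply/bigmax_leqP => n /eqP cancel_n.
have le_nu : n <= size u by have := ltn_ord n; rewrite ltnS leq_min => /andP[].
have <- : size (drop (size u - n) u) = n by rewrite size_drop; lia.
by apply: bound; rewrite ?suffix_drop // cancel_n inv_wordK prefix_take.
Qed.

Definition freely_reduced (w : word) := sorted (fun a b => b != linv a) w.

Lemma reduce_cons a w : reduce (a :: w) =
  if reduce w is b :: r then (if b == linv a then r else a :: b :: r) else [:: a].
Proof. by rewrite /reduce /=; case: foldr. Qed.

Lemma reduce_cat_reduced x z : freely_reduced x ->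
  exists x1 x2 z2 : word,
    [/\ x = x1 ++ x2, reduce z = inv_word x2 ++ z2 & reduce (x ++ z) = x1 ++ z2].
Proof.
elim: x => [_|a x IH red_ax]; first by exists [::], [::], (reduce z).
have [x1 [x2 [z2 [x_eq red_z red_xz]]]] := IH (path_sorted red_ax).
rewrite cat_cons reduce_cons red_xz {}x_eq in red_ax *.
case: x1 {red_xz} red_ax => [|b x1] /= red_ax; last first.
  by rewrite (negbTE (andP red_ax).1); exists (a :: b :: x1), x2, z2.
case: z2 red_z => [|c r] red_z; first by exists [:: a], x2, [::].
case: eqP => [c_eq|_]; last by exists [:: a], x2, (c :: r).
by exists [::], (a :: x2), r; rewrite inv_word_cons -catA red_z c_eq.
Qed.

Lemma reduce_id w : freely_reduced w -> reduce w = w.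
Proof.
move=> /(reduce_cat_reduced [::]) [x1 [x2 [z2 [-> red_0]]]].
move/(congr1 size)/eqP: red_0; rewrite size_cat size_inv_word eq_sym addn_eq0.
by rewrite !size_eq0 => /andP[/eqP-> /eqP->]; rewrite !cats0.
Qed.

Lemma cancelled_junction (u w x2 z2 p y : word) :
  suffix x2 u -> prefix p w -> inv_word x2 ++ z2 = p ++ y ->
  cancelled u w < size p -> size x2 <= cancelled u w.
Proof.
move=> suf_x2 pre_p junction lt_p; set n := minn (size x2) (size p).
have : size (drop (size x2 - n) x2) <= cancelled u w.
  apply: leq_cancelled; first exact: suffix_trans (suffix_drop _ _) suf_x2.
  rewrite -take_inv_word -(takel_cat z2) ?size_inv_word ?geq_minl // junction.
  by rewrite takel_cat ?geq_minr // (prefix_trans (prefix_take _ _) pre_p).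
rewrite size_drop; lia.
Qed.

Section HalfCancellation.

Variables (T : Type) (adjacent : rel T) (U : T -> word).
Hypothesis U_reduced : forall x, freely_reduced (U x).
Hypothesis U_neq0 : forall x, 0 < size (U x).
Hypothesis half_cancellation : forall x y, adjacent x y ->
  2 * cancelled (U x) (U y) < minn (size (U x)) (size (U y)).

Lemma reduce_flatten_prefix x s : path adjacent x s ->
  exists p : word, [/\ prefix p (U x), size (U x) < 2 * size p
              & prefix p (reduce (flatten [seq U y | y <- x :: s]))].
Proof.
elim: s x => [|y s IH] x.
  exists (U x); rewrite /= cats0 reduce_id // prefix_refl.
  by split; rewrite // ltn_Pmull ?U_neq0.
case/andP=> adj_xy /IH [p [pre_p long_p /prefixP [z red_ys]]].
have -> : flatten [seq U y | y <- [:: x, y & s]] =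
          U x ++ flatten [seq U y | y <- y :: s] by [].
have [x1 [x2 [z2 [x_eq red_z ->]]]] :=
  reduce_cat_reduced (flatten [seq U y | y <- y :: s]) (U_reduced x).
have junction : inv_word x2 ++ z2 = p ++ z by rewrite -red_z.
have small := half_cancellation adj_xy.
have short_x2 : size x2 <= cancelled (U x) (U y).
  apply: (cancelled_junction _ pre_p junction); last lia.
  by rewrite x_eq suffix_suffix.
exists x1; rewrite {1}x_eq !prefix_prefix; split => //.
move: small short_x2; rewrite x_eq size_cat; lia.
Qed.

Theorem reduce_flatten_neq0 x s : path adjacent x s ->
  reduce (flatten [seq U y | y <- x :: s]) != [::].
Proof.
case/reduce_flatten_prefix=> p [_ long_p /prefixP [z ->]].
by case: p long_p => [|a p]; rewrite ?muln0.
Qed.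

End HalfCancellation.

Definition uniform_sign (e : bool) (w : word) := all (fun l : letter => l.2 == e) w.

Lemma uniform_sign_reduced e w : uniform_sign e w -> freely_reduced w.
Proof.
elim: w => // a [|b w] IH /andP[/eqP a_e bw_e] //.
apply/andP; split; last exact: IH.
case/andP: bw_e => /eqP b_e _.
by apply/eqP => /(congr1 snd); rewrite b_e /= a_e; case: e {IH a_e b_e}.
Qed.

Lemma uniform_sign_inv e w : uniform_sign e w -> uniform_sign (~~ e) (inv_word w).
Proof. by rewrite /uniform_sign all_rev all_map; apply: sub_all => l /eqP /= ->. Qed.

Lemma uniform_sign_wpow e w : uniform_sign false w -> uniform_sign e (wpow w e).
Proof. by case: e => //; apply: uniform_sign_inv. Qed.

Lemma size_wpow w e : size (wpow w e) = size w.
Proof. by case: e; rewrite ?size_inv_word. Qed.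

Lemma cancelled_uniform_sign e u w :
  uniform_sign e u -> uniform_sign e w -> cancelled u w = 0.
Proof.
move=> u_e w_e; apply/eqP; rewrite -leqn0; apply: cancelled_leq => s.
move=> /suffixP[u1 u_eq] /prefixP[w2 w_eq].
move: u_e w_e; rewrite {}u_eq {}w_eq /uniform_sign !all_cat => /andP[_ s_e] /andP[+ _].
case: s s_e => // a s /andP[/eqP a_e _].
by rewrite inv_word_cons all_cat /= a_e andbT => /andP[_]; case: e {a_e}.
Qed.

Lemma prefix_nseq_size (T : eqType) (x y : T) k1 k2 r1 r2 (s : seq T) :
  x != y -> k1 != k2 ->
  prefix s (nseq k1 x ++ y :: r1) -> prefix s (nseq k2 x ++ y :: r2) ->
  size s <= minn k1 k2.
Proof.
move=> neq_xy neq_k; wlog lt_k : k1 k2 r1 r2 neq_k / k1 < k2 => [hwlog|].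
  have [lt_k|] := boolP (k1 < k2); first exact: hwlog neq_k lt_k.
  rewrite -leqNgt leq_eqVlt eq_sym (negPf neq_k) /= => lt_k pre1 pre2.
  by rewrite minnC; rewrite eq_sym in neq_k; exact: hwlog neq_k lt_k pre2 pre1.
move=> /prefixP[t1 E1] /prefixP[t2 E2].
rewrite (minn_idPl (ltnW lt_k)) leqNgt; apply: contra neq_xy => lt_s.
move: (congr1 (nth x ^~ k1) E1) (congr1 (nth x ^~ k1) E2) => /=.
by rewrite !nth_cat !size_nseq ltnn subnn lt_s lt_k nth_nseq if_same /= => <- /eqP.
Qed.

Section Vword.

Variables (A : finType) (eta : idx A -> nat).

Lemma vword_positive p : uniform_sign false (vword eta p).
Proof.
rewrite /uniform_sign !all_cat !all_nseq /= orbT /=.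
by elim: (DA A - _) => //= n ->.
Qed.

Lemma size_vword p : 2 * eta p <= DA A -> size (vword eta p) = 2 * DA A - 2 * eta p.
Proof.
move=> le_p; rewrite !size_cat !size_nseq size_flatten /shape map_nseq sumn_nseq /=.
lia.
Qed.

Lemma vword_shape p : 2 * eta p < DA A ->
  exists r, vword eta p = nseq (eta p) (b1, false) ++ (b2, false) :: r.
Proof.
move=> lt_p; rewrite /vword.
have [m ->] : exists m, DA A - 2 * eta p = m.+1 by exists (DA A - 2 * eta p).-1; lia.
by eexists.
Qed.

Lemma rev_vword_shape p : 2 * eta p < DA A ->
  exists r, rev (vword eta p) = nseq (eta p) (b2, false) ++ (b1, false) :: r.
Proof.
move=> lt_p; rewrite /vword.
have [m ->] : exists m, DA A - 2 * eta p = m + 1 by exists (DA A - 2 * eta p).-1; lia.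
rewrite nseqD flatten_cat !rev_cat !rev_nseq /= -catA.
by eexists.
Qed.

Lemma cancelled_vword_opposite p1 p2 e :
  2 * eta p1 < DA A -> 2 * eta p2 < DA A -> eta p1 != eta p2 ->
  cancelled (wpow (vword eta p1) e) (wpow (vword eta p2) (~~ e))
    <= minn (eta p1) (eta p2).
Proof.
move=> lt1 lt2 neq_eta; apply: cancelled_leq => s; case: e => /=.
  have [[r1 ->] [r2 ->]] := (vword_shape lt1, vword_shape lt2).
  by rewrite suffix_inv_word -size_inv_word; exact: prefix_nseq_size.
have [[r1 v1] [r2 v2]] := (rev_vword_shape lt1, rev_vword_shape lt2).
rewrite prefix_inv_word -!prefix_rev v1 v2 -size_rev; exact: prefix_nseq_size.
Qed.

Hypothesis eta_inj : injective eta.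
Hypothesis eta_gt0 : forall p, 0 < eta p.
Hypothesis eta_le : forall p, 4 * eta p <= DA A.

Lemma vword_small_cancellation p1 p2 e1 e2 :
  (p1 = p2 /\ e1 != e2) \/
  4 * cancelled (wpow (vword eta p1) e1) (wpow (vword eta p2) e2) < DA A.
Proof.
have [[gt1 le1] [gt2 le2]] := ((eta_gt0 p1, eta_le p1), (eta_gt0 p2, eta_le p2)).
have [<-|neq_e] := eqVneq e1 e2.
  right; rewrite (@cancelled_uniform_sign e1) ?muln0; first lia;
    exact/uniform_sign_wpow/vword_positive.
have [eq_eta|neq_eta] := eqVneq (eta p1) (eta p2); first by left; split; [apply: eta_inj|].
have -> : e2 = ~~ e1 by case: e1 e2 neq_e => [] [].
have lt1 : 2 * eta p1 < DA A by lia.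
have lt2 : 2 * eta p2 < DA A by lia.
have := cancelled_vword_opposite e1 lt1 lt2 neq_eta.
move/negbTE: neq_eta; right; lia.
Qed.

Lemma reduce_vword_neq0 (s : seq (idx A * bool)) : s != [::] -> idx_reduced s ->
  reduce (flatten [seq wpow (vword eta q.1) q.2 | q <- s]) != [::].
Proof.
case: s => [//|q s] _ red_s.
apply: (reduce_flatten_neq0 (U := fun q => wpow (vword eta q.1) q.2) _ _ _ red_s).
- by move=> q'; apply/uniform_sign_reduced/uniform_sign_wpow/vword_positive.
- move=> q'; have [gt0 le] := (eta_gt0 q'.1, eta_le q'.1).
  by rewrite size_wpow size_vword; lia.
- move=> q1 q2 adj; have [le1 le2] := (eta_le q1.1, eta_le q2.1).
  have [[eq1 neq2]|] := vword_small_cancellation q1.1 q2.1 q1.2 q2.2.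
    by move: adj; rewrite eq1 eqxx neq2.
  rewrite !size_wpow !size_vword; lia.
Qed.

End Vword.

Theorem lemma5p1 (A : finType) (hA : 0 < #|A|) (eta : idx A -> nat)
    (heta : eta_bij eta) :
  (forall (p1 p2 : idx A) (e1 e2 : bool),
      (p1 = p2 /\ e1 != e2) \/
      4 * cancelled (wpow (vword eta p1) e1) (wpow (vword eta p2) e2) < DA A)
  /\
  (forall s : seq (idx A * bool), s != [::] -> idx_reduced s ->
      reduce (flatten [seq wpow (vword eta q.1) q.2 | q <- s]) != [::]).
Proof.
have [eta_range eta_inj _] := heta.
have eta_gt0 p : 0 < eta p by case/andP: (eta_range p).
have eta_le p : 4 * eta p <= DA A.
  by case/andP: (eta_range p) => _; rewrite leq_divRL // mulnC.
split; [exact: vword_small_cancellation | exact: reduce_vword_neq0].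
Qed.
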